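(* For every integer $m\ge3$, $\{1,m\}\notin\mathcal{I}_1$; that is, there is no interval-filling summable sequence of positive reals whose cardinal function has range exactly $\{1,m\}$.
   Context: For a summable sequence $\mathbf{x}=(x_n)$ of positive reals, $\mathcal{A}(\mathbf{x})=\{\sum_{n\in A}x_n: A\subseteq\mathbb{N}\}$ is its achievement set and its cardinal function $f$ assigns to $x\in\mathcal{A}(\mathbf{x})$ the cardinality (a positive integer, $\omega$, or $\mathfrak{c}$) of $\{(\varepsilon_n)\in\{0,1\}^{\mathbb{N}}:\sum\varepsilon_nx_n=x\}$. A sequence is interval-filling if its achievement set is an interval. $\mathcal{I}_1$ is the family of ranges of cardinal functions of interval-filling sequences. *)

From Stdlib Require Import Reals List.
Open Scope R_scope.

Definition summable (x : nat -> R) : Prop := exists l : R, infinite_sum x l.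

(* eps (a 0-1 sequence, i.e. the indicator of A ⊆ ℕ) represents v:
   sum_n eps_n x_n = v. *)
Definition represents (x : nat -> R) (v : R) (eps : nat -> bool) : Prop :=
  infinite_sum (fun n => if eps n then x n else 0) v.

Definition achievement_set (x : nat -> R) (v : R) : Prop :=
  exists eps : nat -> bool, represents x v eps.

Definition has_card (P : (nat -> bool) -> Prop) (k : nat) : Prop :=
  exists l : list (nat -> bool),
    NoDup l /\ length l = k /\ forall e, P e <-> In e l.

Definition interval_filling (x : nat -> R) : Prop :=
  forall a b c, achievement_set x a -> achievement_set x b ->
    a <= c <= b -> achievement_set x c.

(* The range of the cardinal function f of x equals the set S of positive
   integers (in particular no value ω or 𝔠 is attained). *)
Definition cardinal_range_is (x : nat -> R) (S : nat -> Prop) : Prop :=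
  (forall v, achievement_set x v ->
     exists k, S k /\ has_card (represents x v) k) /\
  (forall k, S k ->
     exists v, achievement_set x v /\ has_card (represents x v) k).

From Stdlib Require Import Reals List.
From Stdlib Require Import Lia Lra Bool FunctionalExtensionality Classical ClassicalEpsilon.
From Coquelicot Require Import Coquelicot.
Open Scope R_scope.

(* Let S be the total sum, x_p a largest term and T = S - x_p the sum of the other
   terms. Interval filling forces the gap condition c <= sum_{x_k < c} x_k for
   0 < c <= S. This condition passes to the terms below a threshold and to the terms
   other than p, and by a Kakeya-type argument (approximation through the finitely
   many large terms, then a compactness step) each such family fills [0, its sum].
   If T < 2 x_p, complementation within the terms other than p matches the
   representations of T - x_p with those of x_p other than {p}, so
   f(x_p) = f(T - x_p) + 1, impossible for values in {1, m}. If T >= 2 x_p, take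
   x_q < x_p: x_q is also a sum of smaller terms, so f(x_q) = m; adding p to its m
   representations and adding one representation of x_q + x_p that avoids p gives
   f(x_q + x_p) > m. *)

Definition select (x : nat -> R) (e : nat -> bool) (n : nat) : R :=
  if e n then x n else 0.

Definition subsum (x : nat -> R) (e : nat -> bool) : R := Series (select x e).

Definition pos_summable (x : nat -> R) : Prop := (forall n, 0 < x n) /\ ex_series x.

Definition subset (e M : nat -> bool) : Prop := forall n, e n = true -> M n = true.

Definition single (k : nat) : nat -> bool := fun n => Nat.eqb n k.

Definition Rltb (a b : R) : bool := if Rlt_dec a b then true else false.

Lemma has_card_length_le (P : (nat -> bool) -> Prop) a l :
  has_card P a -> NoDup l -> (forall u, In u l -> P u) -> (length l <= a)%nat.
Proof.
  intros [lp [Hnd [<- HP]]] Hl Hin.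
  apply NoDup_incl_length; [exact Hl|]. intros u Hu. apply HP, Hin, Hu.
Qed.

Lemma has_card_succ_le (P Q : (nat -> bool) -> Prop) a b g e0 :
  has_card P a -> has_card Q b -> Q e0 ->
  (forall e, P e -> Q (g e) /\ g e <> e0) ->
  (forall e e', P e -> P e' -> g e = g e' -> e = e') -> (S a <= b)%nat.
Proof.
  intros HPa HQb HQ0 Hg Hinj. destruct HPa as [lp [Hnd [<- HP]]].
  replace (S (length lp)) with (length (e0 :: map g lp)) by (simpl; now rewrite length_map).
  apply (has_card_length_le Q); [exact HQb| |].
  - constructor.
    + intros Hin. apply in_map_iff in Hin as [e [He Hel]].
      apply (proj2 (Hg e (proj2 (HP e) Hel))), He.
    + apply NoDup_map_NoDup_ForallPairs; [|exact Hnd].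
      intros u v Hu Hv. apply Hinj; apply HP; assumption.
  - intros u [<-|Hu]; [exact HQ0|].
    apply in_map_iff in Hu as [e [<- He]]. apply Hg, HP, He.
Qed.

Lemma has_card_le_succ (P Q : (nat -> bool) -> Prop) a b g e0 :
  has_card P a -> has_card Q b -> Q e0 ->
  (forall e, Q e -> e <> e0 -> P (g e)) ->
  (forall e e', Q e -> Q e' -> e <> e0 -> e' <> e0 -> g e = g e' -> e = e') ->
  (b <= S a)%nat.
Proof.
  intros HPa [lq [Hnd [<- HQ]]] HQ0 Hg Hinj.
  apply HQ in HQ0. apply in_split in HQ0 as [l1 [l2 ->]].
  destruct (NoDup_remove _ _ _ Hnd) as [Hnd' Hnot].
  assert (Hrest : forall e, In e (l1 ++ l2) -> Q e /\ e <> e0).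
  { intros e He. split.
    - apply HQ. apply in_app_or in He as [He|He]; apply in_or_app; [left|right; right]; exact He.
    - intros ->. exact (Hnot He). }
  assert (Hlen : (length (map g (l1 ++ l2)) <= a)%nat).
  { apply (has_card_length_le P); [exact HPa| |].
    - apply NoDup_map_NoDup_ForallPairs; [|exact Hnd'].
      intros u v Hu Hv. apply Hinj; apply Hrest; assumption.
    - intros u Hu. apply in_map_iff in Hu as [e [<- He]]. apply Hg; apply Hrest, He. }
  rewrite length_map, length_app in Hlen. rewrite length_app. simpl. lia.
Qed.

Lemma list_argmax (f : nat -> R) l :
  l <> nil -> exists b, In b l /\ forall j, In j l -> f j <= f b.
Proof.
  induction l as [|a l IH]; intros Hl; [congruence|].
  destruct l as [|c l'].
  - exists a. split; [now left|]. intros j [->|[]]. lra.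
  - destruct IH as [b [Hb Hmax]]; [discriminate|].
    destruct (Rle_dec (f b) (f a)).
    + exists a. split; [now left|]. intros j [->|Hj]; [lra|]. specialize (Hmax j Hj). lra.
    + exists b. split; [now right|]. intros j [->|Hj]; [lra|]. auto.
Qed.

Section Subsums.

Variable x : nat -> R.

Lemma subsum_ext e e' : (forall n, e n = e' n) -> subsum x e = subsum x e'.
Proof. intros H. apply Series_ext. intros n. unfold select. now rewrite H. Qed.

Lemma subsum_finite e N :
  (forall n, (N < n)%nat -> e n = false) -> subsum x e = sum_f_R0 (select x e) N.
Proof.
  intros H. apply is_series_unique, is_series_Reals.
  intros eps Heps. exists N. intros n Hn. unfold R_dist.
  replace (sum_f_R0 (select x e) n) with (sum_f_R0 (select x e) N);
    [rewrite Rminus_diag, Rabs_R0; exact Heps|].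
  induction Hn; [reflexivity|]. simpl. rewrite <- IHHn. unfold select. rewrite H by lia. lra.
Qed.

Lemma subsum_empty : subsum x (fun _ => false) = 0.
Proof. rewrite (subsum_finite _ 0) by auto. reflexivity. Qed.

Lemma subsum_single k : subsum x (single k) = x k.
Proof.
  rewrite (subsum_finite _ k).
  2:{ intros n Hn. apply Nat.eqb_neq. lia. }
  destruct k as [|k]; [reflexivity|]. simpl.
  rewrite sum_eq_R0; [unfold select, single; rewrite Nat.eqb_refl; lra|].
  intros n Hn. unfold select, single. now rewrite (proj2 (Nat.eqb_neq n (S k))) by lia.
Qed.

Hypothesis hx : pos_summable x.

Lemma select_nonneg e n : 0 <= select x e n.
Proof. unfold select. destruct (e n); [apply Rlt_le, hx|lra]. Qed.

Lemma ex_series_select e : ex_series (select x e).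
Proof.
  apply (@ex_series_le R_AbsRing R_CompleteNormedModule _ x); [|apply hx].
  intros n. change (Rabs (select x e n) <= x n).
  rewrite Rabs_pos_eq by apply select_nonneg.
  unfold select. destruct (e n); [lra|apply Rlt_le, hx].
Qed.

Lemma represents_iff v e : represents x v e <-> subsum x e = v.
Proof.
  split.
  - intros H. apply is_series_unique, is_series_Reals, H.
  - intros <-. apply is_series_Reals, Series_correct, ex_series_select.
Qed.

Lemma subsum_le e e' : subset e e' -> subsum x e <= subsum x e'.
Proof.
  intros He. apply Series_le; [|apply ex_series_select].
  intros n. split; [apply select_nonneg|]. unfold select.
  destruct (e n) eqn:E; [rewrite He by exact E; lra|].
  destruct (e' n); [apply Rlt_le, hx|lra].
Qed.

Lemma subsum_nonneg e : 0 <= subsum x e.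
Proof. rewrite <- subsum_empty. apply subsum_le. discriminate. Qed.

Lemma subsum_union e1 e2 : (forall n, e1 n && e2 n = false) ->
  subsum x (fun n => e1 n || e2 n) = subsum x e1 + subsum x e2.
Proof.
  intros Hd. unfold subsum. rewrite <- Series_plus by apply ex_series_select.
  apply Series_ext. intros n. unfold select. specialize (Hd n).
  destruct (e1 n), (e2 n); simpl in *; try discriminate; lra.
Qed.

Lemma subsum_add e k : e k = false ->
  subsum x (fun n => e n || single k n) = subsum x e + x k.
Proof.
  intros Hk. rewrite subsum_union, subsum_single; [reflexivity|].
  intros n. unfold single. destruct (Nat.eqb_spec n k) as [->|]; [now rewrite Hk|].
  apply andb_false_r.
Qed.

Lemma subsum_remove e k : e k = true ->
  subsum x e = subsum x (fun n => e n && negb (single k n)) + x k.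
Proof.
  intros Hk. rewrite <- subsum_add.
  - apply subsum_ext. intros n. unfold single.
    destruct (Nat.eqb_spec n k) as [->|]; [now rewrite Hk|].
    now rewrite andb_true_r, orb_false_r.
  - unfold single. now rewrite Nat.eqb_refl, andb_false_r.
Qed.

Lemma subsum_ge_term e k : e k = true -> x k <= subsum x e.
Proof.
  intros Hk. rewrite (subsum_remove e k Hk).
  pose proof (subsum_nonneg (fun n => e n && negb (single k n))). lra.
Qed.

Lemma subsum_avoid e v k : subsum x e = v -> v < x k -> e k = false.
Proof.
  intros He Hv. destruct (e k) eqn:E; [|reflexivity].
  pose proof (subsum_ge_term e k E). lra.
Qed.

Lemma subsum_eq_term e k : e k = true -> subsum x e = x k -> e = single k.
Proof.
  intros Hk Hs. apply functional_extensionality. intros n. unfold single.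
  destruct (Nat.eqb_spec n k) as [->|Hnk]; [exact Hk|].
  destruct (e n) eqn:En; [exfalso|reflexivity].
  rewrite (subsum_remove e k Hk) in Hs.
  assert (x n <= subsum x (fun j => e j && negb (single k j))).
  { apply subsum_ge_term. unfold single. rewrite En. now rewrite (proj2 (Nat.eqb_neq n k)). }
  pose proof (proj1 hx n). lra.
Qed.

Definition tail n := subsum x (fun k => Nat.leb n k).

Lemma subsum_split e n : subsum x e =
  subsum x (fun k => e k && Nat.ltb k n) + subsum x (fun k => e k && Nat.leb n k).
Proof.
  rewrite <- subsum_union.
  - apply subsum_ext. intros k. destruct (e k); [simpl|reflexivity].
    destruct (Nat.ltb_spec k n), (Nat.leb_spec n k); reflexivity || lia.
  - intros k. destruct (e k); [simpl|reflexivity].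
    destruct (Nat.ltb_spec k n), (Nat.leb_spec n k); reflexivity || lia.
Qed.

Lemma subsum_prefix_succ e n : subsum x (fun k => e k && Nat.ltb k (S n)) =
  subsum x (fun k => e k && Nat.ltb k n) + select x e n.
Proof.
  unfold select. destruct (e n) eqn:En.
  - rewrite <- subsum_add by (now rewrite Nat.ltb_irrefl, andb_false_r).
    apply subsum_ext. intros k. unfold single. destruct (Nat.eqb_spec k n) as [->|Hkn].
    + rewrite En, Nat.ltb_irrefl. apply Nat.ltb_lt. lia.
    + rewrite orb_false_r. destruct (e k); [simpl|reflexivity].
      destruct (Nat.ltb_spec k (S n)), (Nat.ltb_spec k n); reflexivity || lia.
  - rewrite Rplus_0_r. apply subsum_ext. intros k.
    destruct (Nat.eq_dec k n) as [->|]; [now rewrite En|].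
    destruct (e k); [simpl|reflexivity].
    destruct (Nat.ltb_spec k (S n)), (Nat.ltb_spec k n); reflexivity || lia.
Qed.

Lemma tail_lt eps : 0 < eps -> exists N, tail N < eps.
Proof.
  intros Heps.
  destruct (proj2 (represents_iff _ (fun _ => true)) eq_refl eps Heps) as [N HN].
  exists (S N). specialize (HN N (le_n N)). unfold R_dist in HN.
  change (sum_f_R0 (fun n => x n) N) with (sum_f_R0 x N) in HN.
  rewrite (subsum_split _ (S N)) in HN.
  replace (subsum x (fun k => true && Nat.ltb k (S N))) with (sum_f_R0 x N) in HN.
  - change (subsum x (fun k => true && Nat.leb (S N) k)) with (tail (S N)) in HN.
    pose proof (subsum_nonneg (fun k => Nat.leb (S N) k)).
    unfold tail in *. rewrite Rabs_left1 in HN by lra. lra.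
  - rewrite (subsum_finite _ N) by (intros n Hn; apply Nat.ltb_ge; lia).
    apply sum_eq. intros i Hi. unfold select. simpl.
    now rewrite (proj2 (Nat.ltb_lt i (S N))) by lia.
Qed.

Lemma term_lt d : 0 < d -> exists N, forall k, (N <= k)%nat -> x k < d.
Proof.
  intros Hd. destruct (tail_lt d Hd) as [N HN]. exists N. intros k Hk.
  eapply Rle_lt_trans; [|exact HN]. apply subsum_ge_term. now apply Nat.leb_le.
Qed.

Lemma subsum_agree e e' n : (forall k, (k < n)%nat -> e k = e' k) ->
  Rabs (subsum x e - subsum x e') <= tail n.
Proof.
  intros Ha. rewrite (subsum_split e n), (subsum_split e' n).
  replace (subsum x (fun k => e' k && Nat.ltb k n)) with (subsum x (fun k => e k && Nat.ltb k n)).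
  2:{ apply subsum_ext. intros k. destruct (Nat.ltb_spec k n); [now rewrite Ha|].
      now rewrite !andb_false_r. }
  assert (Htail : forall f, 0 <= subsum x (fun k => f k && Nat.leb n k) <= tail n).
  { intros f. split; [apply subsum_nonneg|]. apply subsum_le.
    intros k Hk. now apply andb_true_iff in Hk. }
  pose proof (Htail e). pose proof (Htail e'). apply Rabs_le. lra.
Qed.

Lemma exists_max_term M k0 : M k0 = true ->
  exists p, M p = true /\ forall k, M k = true -> x k <= x p.
Proof.
  intros Hk0. destruct (term_lt (x k0) (proj1 hx k0)) as [N HN].
  destruct (list_argmax x (k0 :: filter M (seq 0 N))) as [p [Hp Hmax]]; [discriminate|].
  exists p. split.
  - destruct Hp as [<-|Hp]; [exact Hk0|]. now apply filter_In in Hp.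
  - intros k Hk. destruct (Nat.lt_ge_cases k N).
    + apply Hmax. right. apply filter_In. split; [apply in_seq; lia|exact Hk].
    + specialize (HN k H). specialize (Hmax k0 (or_introl eq_refl)). lra.
Qed.

End Subsums.

Definition gap_condition (x : nat -> R) (M : nat -> bool) : Prop :=
  forall c, 0 < c -> c <= subsum x M -> c <= subsum x (fun k => M k && Rltb (x k) c).

Section Kakeya.

Variable x : nat -> R.
Hypothesis hx : pos_summable x.

Lemma gap_condition_lower_part M N : gap_condition x M -> subset N M ->
  (forall k j, M k = true -> N k = false -> N j = true -> x j <= x k) ->
  gap_condition x N.
Proof.
  intros Hgap HNM Hlow c Hc HcN.
  destruct (classic (exists k, M k = true /\ N k = false /\ x k < c)) as [[k [Hk [HNk Hxk]]]|Hno].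
  - eapply Rle_trans; [exact HcN|]. apply subsum_le; [exact hx|].
    intros j Hj. rewrite Hj. unfold Rltb. destruct (Rlt_dec (x j) c); [reflexivity|].
    specialize (Hlow k j Hk HNk Hj). lra.
  - eapply Rle_trans;
      [apply Hgap; [exact Hc|]; eapply Rle_trans; [exact HcN|]; now apply subsum_le|].
    apply subsum_le; [exact hx|]. intros k Hk. apply andb_true_iff in Hk as [HMk Hlt].
    rewrite Hlt, andb_true_r. destruct (N k) eqn:E; [reflexivity|].
    exfalso. apply Hno. exists k. unfold Rltb in Hlt. destruct (Rlt_dec (x k) c); easy.
Qed.

Lemma small_terms_approx M d t : 0 < d -> (forall k, M k = true -> x k < d) ->
  0 <= t <= subsum x M -> exists e, subset e M /\ t - d < subsum x e <= t.
Proof.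
  intros Hd Hsmall Ht. set (P n := subsum x (fun k => M k && Nat.ltb k n)).
  enough (Hprefix : exists n, t - d < P n <= t).
  { destruct Hprefix as [n Hn]. exists (fun k => M k && Nat.ltb k n). split; [|exact Hn].
    intros k Hk. now apply andb_true_iff in Hk. }
  apply NNPP. intros Hnone.
  assert (HPS : forall n, P (S n) <= P n + d).
  { intros n. unfold P. rewrite (subsum_prefix_succ x hx). unfold select.
    destruct (M n) eqn:Hn; [specialize (Hsmall n Hn)|]; lra. }
  assert (Hbelow : forall n, P n + d <= t).
  { induction n as [|n IH].
    - assert (HP0 : P 0%nat = 0).
      { unfold P. rewrite <- (subsum_empty x). apply subsum_ext. intros k. apply andb_false_r. }
      apply Rnot_lt_le. intros Hlt. apply Hnone. exists 0%nat. fold (P 0%nat). lra.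
    - apply Rnot_lt_le. intros Hlt. apply Hnone. exists (S n). fold (P (S n)).
      specialize (HPS n). lra. }
  destruct (tail_lt x hx d Hd) as [N HN]. specialize (Hbelow N).
  assert (subsum x M <= P N + tail x N).
  { rewrite (subsum_split x hx M N). apply Rplus_le_compat_l, subsum_le; [exact hx|].
    intros k Hk. now apply andb_true_iff in Hk. }
  lra.
Qed.

Lemma gap_condition_approx_listed d : 0 < d -> forall n l M t, (length l <= n)%nat ->
  (forall k, M k = true -> d <= x k -> In k l) -> gap_condition x M ->
  0 <= t <= subsum x M -> exists e, subset e M /\ t - d < subsum x e <= t.
Proof.
  intros Hd n. induction n as [|n IH]; intros l M t Hl Hlisted Hgap Ht;
    (destruct (classic (exists k, M k = true /\ d <= x k)) as [[k0 [Hk0 Hdk0]]|Hsmall];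
     [|apply small_terms_approx; [exact Hd| |exact Ht];
       intros k Hk; apply Rnot_le_lt; intros Hdk; apply Hsmall; now exists k]).
  - destruct l; [destruct (Hlisted k0 Hk0 Hdk0)|simpl in Hl; lia].
  - destruct (exists_max_term x hx M k0 Hk0) as [b [Hb Hmax]].
    set (M' := fun k => M k && negb (single b k)).
    assert (HM'M : subset M' M) by (intros k Hk; now apply andb_true_iff in Hk).
    assert (HM'b : M' b = false) by (unfold M', single; now rewrite Nat.eqb_refl, andb_false_r).
    assert (Hgap' : gap_condition x M').
    { apply (gap_condition_lower_part M); [exact Hgap|exact HM'M|].
      intros k j Hk HM'k HM'j. unfold M', single in HM'k. rewrite Hk in HM'k.
      apply negb_false_iff, Nat.eqb_eq in HM'k as ->. apply Hmax, HM'M, HM'j. }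
    assert (Hsplit : subsum x M = subsum x M' + x b) by (apply subsum_remove; assumption).
    assert (Hbl : In b l) by (apply Hlisted; [exact Hb|specialize (Hmax k0 Hk0); lra]).
    assert (Hlen : (length (remove Nat.eq_dec b l) <= n)%nat)
      by (pose proof (remove_length_lt Nat.eq_dec l b Hbl); lia).
    assert (Hlisted' : forall k, M' k = true -> d <= x k -> In k (remove Nat.eq_dec b l)).
    { intros k Hk Hdk. unfold M', single in Hk. apply andb_true_iff in Hk as [Hk Hkb].
      apply in_in_remove; [now apply negb_true_iff, Nat.eqb_neq in Hkb|].
      now apply Hlisted. }
    destruct (Rle_dec t (subsum x M')) as [HtM'|HtM'].
    + destruct (IH _ M' t Hlen Hlisted' Hgap') as [e [HeM' He]]; [split; [apply Ht|exact HtM']|].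
      exists e. split; [intros k Hk; apply HM'M, HeM', Hk|exact He].
    + assert (Hxb : x b <= subsum x M').
      { pose proof (subsum_nonneg x hx M').
        eapply Rle_trans; [apply Hgap; [apply hx|rewrite Hsplit; lra]|].
        apply subsum_le; [exact hx|]. intros k Hk. apply andb_true_iff in Hk as [Hk Hlt].
        unfold M', single. rewrite Hk. destruct (Nat.eqb_spec k b) as [->|]; [|reflexivity].
        unfold Rltb in Hlt. destruct (Rlt_dec (x b) (x b)); [lra|discriminate]. }
      destruct (IH _ M' (t - x b) Hlen Hlisted' Hgap') as [e [HeM' He]]; [lra|].
      assert (Heb : e b = false) by (destruct (e b) eqn:E; [rewrite (HeM' b E) in HM'b|]; easy).
      exists (fun k => e k || single b k). rewrite (subsum_add x hx e b Heb). split; [|lra].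
      intros k Hk. apply orb_true_iff in Hk as [Hk|Hk]; [apply HM'M, HeM', Hk|].
      now apply Nat.eqb_eq in Hk as ->.
Qed.

Lemma gap_condition_approx M d t : 0 < d -> gap_condition x M ->
  0 <= t <= subsum x M -> exists e, subset e M /\ t - d < subsum x e <= t.
Proof.
  intros Hd Hgap Ht. destruct (term_lt x hx d Hd) as [N HN].
  apply (gap_condition_approx_listed d Hd N (seq 0 N));
    [now rewrite length_seq| |exact Hgap|exact Ht].
  intros k _ Hdk. apply in_seq. split; [lia|].
  destruct (Nat.lt_ge_cases k N) as [|HkN]; [assumption|]. specialize (HN k HkN). lra.
Qed.

Section Closure.

Variables (M : nat -> bool) (t : R).

Definition approximable (p : nat -> bool) (n : nat) : Prop :=
  forall d, 0 < d -> exists e, subset e M /\ (forall k, (k < n)%nat -> e k = p k) /\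
    Rabs (subsum x e - t) < d.

Lemma approximable_extend p n : approximable p n -> p n = false ->
  ~ approximable (fun k => p k || single n k) (S n) -> approximable p (S n).
Proof.
  intros Hp Hpn Hnot.
  assert (Hfar : exists d1, 0 < d1 /\ forall e, subset e M ->
            (forall k, (k < S n)%nat -> e k = p k || single n k) -> d1 <= Rabs (subsum x e - t)).
  { apply NNPP. intros Hnone. apply Hnot. intros d Hd. apply NNPP. intros Hno_e. apply Hnone.
    exists d. split; [exact Hd|]. intros e He Ha. apply Rnot_lt_le. intros Hlt.
    apply Hno_e. now exists e. }
  destruct Hfar as [d1 [Hd1 Hfar]].
  intros d Hd. destruct (Hp (Rmin d d1) (Rmin_pos _ _ Hd Hd1)) as [e [He [Ha Hclose]]].
  pose proof (Rmin_l d d1). pose proof (Rmin_r d d1).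
  exists e. split; [exact He|]. split; [|lra].
  intros k Hkn. destruct (Nat.eq_dec k n) as [->|]; [|apply Ha; lia].
  rewrite Hpn. destruct (e n) eqn:En; [exfalso|reflexivity].
  enough (d1 <= Rabs (subsum x e - t)) by lra.
  apply Hfar; [exact He|]. intros k Hk. unfold single.
  destruct (Nat.eqb_spec k n) as [->|]; [now rewrite En, orb_true_r|].
  rewrite orb_false_r. apply Ha. lia.
Qed.

(* König's lemma on the binary tree: extend by [true] whenever that keeps [t] approximable. *)
Fixpoint greedy_prefix (n : nat) : nat -> bool :=
  match n with
  | O => fun _ => false
  | S n =>
      let p := greedy_prefix n in
      if excluded_middle_informative (approximable (fun k => p k || single n k) (S n))
      then fun k => p k || single n k else p
  end.

Lemma greedy_prefix_high n k : (n <= k)%nat -> greedy_prefix n k = false.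
Proof.
  induction n as [|n IH]; intros Hk; [reflexivity|]. simpl.
  destruct excluded_middle_informative; [|apply IH; lia].
  rewrite IH by lia. apply Nat.eqb_neq. lia.
Qed.

Lemma greedy_prefix_stable n k : (k < n)%nat -> greedy_prefix n k = greedy_prefix (S k) k.
Proof.
  induction n as [|n IH]; intros Hk; [lia|].
  destruct (Nat.eq_dec k n) as [->|]; [reflexivity|]. rewrite <- IH by lia. simpl.
  destruct excluded_middle_informative; [|reflexivity].
  unfold single. rewrite (proj2 (Nat.eqb_neq k n)) by assumption. apply orb_false_r.
Qed.

Lemma greedy_prefix_approximable : approximable (fun _ => false) 0 ->
  forall n, approximable (greedy_prefix n) n.
Proof.
  intros H0 n. induction n as [|n IH]; [exact H0|]. simpl.
  destruct excluded_middle_informative as [Hext|Hext]; [exact Hext|].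
  apply approximable_extend; [exact IH|apply greedy_prefix_high; lia|exact Hext].
Qed.

Lemma subsum_closed : (forall d, 0 < d -> exists e, subset e M /\ Rabs (subsum x e - t) < d) ->
  exists e, subset e M /\ subsum x e = t.
Proof.
  intros Happ.
  assert (Hgreedy : forall n, approximable (greedy_prefix n) n).
  { apply greedy_prefix_approximable. intros d Hd. destruct (Happ d Hd) as [e [He Hc]].
    exists e. repeat split; [exact He| |exact Hc]. intros k Hk. lia. }
  exists (fun k => greedy_prefix (S k) k). split.
  - intros k Hk. destruct (Hgreedy (S k) 1 Rlt_0_1) as [e [He [Ha _]]].
    apply He. rewrite Ha; [exact Hk|lia].
  - set (e := fun k => greedy_prefix (S k) k). apply NNPP. intros Hne.
    assert (Hq : 0 < Rabs (subsum x e - t) / 2)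
      by (apply Rdiv_lt_0_compat, Rlt_0_2; apply Rabs_pos_lt; lra).
    destruct (tail_lt x hx _ Hq) as [N HN].
    destruct (Hgreedy N _ Hq) as [e' [_ [Ha Hclose]]].
    assert (Hagree : Rabs (subsum x e - subsum x e') <= tail x N).
    { apply subsum_agree; [exact hx|]. intros k Hk. rewrite Ha by exact Hk.
      symmetry. apply greedy_prefix_stable, Hk. }
    pose proof (Rabs_triang (subsum x e - subsum x e') (subsum x e' - t)).
    replace (subsum x e - subsum x e' + (subsum x e' - t)) with (subsum x e - t) in H by ring.
    lra.
Qed.

End Closure.

Theorem gap_condition_fills M t : gap_condition x M -> 0 <= t <= subsum x M ->
  exists e, subset e M /\ subsum x e = t.
Proof.
  intros Hgap Ht. apply subsum_closed. intros d Hd.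
  destruct (gap_condition_approx M d t Hd Hgap Ht) as [e [He Hclose]].
  exists e. split; [exact He|]. apply Rabs_def1; lra.
Qed.

End Kakeya.

Section Cardinalities.

Variable x : nat -> R.
Hypothesis hx : pos_summable x.

Definition rest (p : nat) : R := subsum x (fun k => negb (single p k)).

Lemma subsum_all_split p : subsum x (fun _ => true) = rest p + x p.
Proof. now rewrite (subsum_remove x hx _ p). Qed.

Lemma gap_condition_of_fill :
  (forall t, 0 <= t <= subsum x (fun _ => true) -> exists e, subsum x e = t) ->
  gap_condition x (fun _ => true).
Proof.
  intros Hfill c Hc HcS. apply Rnot_lt_le. intros Hlt.
  set (L := subsum x (fun k => true && Rltb (x k) c)) in Hlt.
  pose proof (subsum_nonneg x hx (fun k => true && Rltb (x k) c)).
  destruct (Hfill ((L + c) / 2)) as [e He]; [unfold L in *; lra|].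
  destruct (classic (exists k, e k = true /\ c <= x k)) as [[k [Hk Hck]]|Hsmall].
  - pose proof (subsum_ge_term x hx e k Hk). lra.
  - enough (subsum x e <= L) by lra. apply subsum_le; [exact hx|].
    intros k Hk. unfold Rltb. destruct (Rlt_dec (x k) c); [reflexivity|].
    exfalso. apply Hsmall. exists k. split; [exact Hk|lra].
Qed.

Lemma max_term_le_rest p : gap_condition x (fun _ => true) ->
  (forall k, x k <= x p) -> x p <= rest p.
Proof.
  intros Hgap Hmax.
  eapply Rle_trans; [apply Hgap; [apply hx|apply subsum_ge_term; auto]|].
  apply subsum_le; [exact hx|]. intros k Hk. unfold single.
  destruct (Nat.eqb_spec k p) as [->|]; [|reflexivity].
  unfold Rltb in Hk. destruct (Rlt_dec (x p) (x p)); [lra|discriminate].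
Qed.

Lemma card_reps_term_ge2 q b : gap_condition x (fun _ => true) ->
  has_card (represents x (x q)) b -> (2 <= b)%nat.
Proof.
  intros Hgap Hcard. set (M := fun k => Rltb (x k) (x q)).
  assert (HgapM : gap_condition x M).
  { apply (gap_condition_lower_part x hx (fun _ => true)); [exact Hgap|easy|].
    intros k j _ Hk Hj. unfold M, Rltb in Hk, Hj.
    destruct (Rlt_dec (x k) (x q)), (Rlt_dec (x j) (x q)); try discriminate. lra. }
  destruct (gap_condition_fills x hx M (x q)) as [e [HeM He]]; [exact HgapM| |].
  { split; [apply Rlt_le, hx|]. apply Hgap; [apply hx|apply subsum_ge_term; auto]. }
  assert (Heq : e q = false).
  { destruct (e q) eqn:E; [|reflexivity]. specialize (HeM q E). unfold M, Rltb in HeM.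
    destruct (Rlt_dec (x q) (x q)); [lra|discriminate]. }
  change 2%nat with (length (single q :: e :: nil)).
  apply (has_card_length_le _ _ _ Hcard).
  - constructor; [|constructor; [intros []|constructor]].
    intros [Hsq|[]]. rewrite Hsq in Heq. unfold single in Heq. now rewrite Nat.eqb_refl in Heq.
  - intros u [<-|[<-|[]]]; apply (represents_iff x hx); [apply subsum_single|exact He].
Qed.

Lemma card_reps_max_term p a b : rest p < 2 * x p ->
  has_card (represents x (rest p - x p)) a -> has_card (represents x (x p)) b -> b = S a.
Proof.
  intros Hrest Ha Hb.
  set (compl e := fun k => negb (e k) && negb (single p k)).
  assert (Hcompl_p : forall e, compl e p = false).
  { intros e. unfold compl, single. now rewrite Nat.eqb_refl, andb_false_r. }
  assert (Hcompl_sum : forall e, e p = false -> subsum x e + subsum x (compl e) = rest p).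
  { intros e Hep. rewrite <- (subsum_union x hx) by (intros k; unfold compl; now destruct (e k)).
    apply subsum_ext. intros k. unfold compl, single.
    destruct (Nat.eqb_spec k p) as [->|]; [now rewrite Hep|]. now destruct (e k). }
  assert (Hcompl_inj : forall e e', e p = false -> e' p = false -> compl e = compl e' -> e = e').
  { intros e e' Hep He'p Heq. apply functional_extensionality. intros k.
    destruct (Nat.eq_dec k p) as [->|Hkp]; [congruence|].
    apply (f_equal (fun f => f k)) in Heq. unfold compl, single in Heq.
    rewrite (proj2 (Nat.eqb_neq k p) Hkp), !andb_true_r in Heq.
    now destruct (e k), (e' k). }
  assert (Hsmall : forall e, represents x (rest p - x p) e -> e p = false).
  { intros e He. apply (represents_iff x hx) in He. apply (subsum_avoid x hx e _ p He). lra. }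
  assert (Hsingle : represents x (x p) (single p)) by (apply (represents_iff x hx), subsum_single).
  assert (Hge : (S a <= b)%nat).
  { apply (has_card_succ_le _ _ a b compl (single p) Ha Hb Hsingle).
    - intros e He. split.
      + apply (represents_iff x hx). pose proof (Hcompl_sum e (Hsmall e He)).
        apply (represents_iff x hx) in He. lra.
      + intros Heq. apply (f_equal (fun f => f p)) in Heq. rewrite Hcompl_p in Heq.
        unfold single in Heq. now rewrite Nat.eqb_refl in Heq.
    - intros e e' He He'. apply Hcompl_inj; apply Hsmall; assumption. }
  assert (Havoid : forall e, represents x (x p) e -> e <> single p -> e p = false).
  { intros e He Hne. apply (represents_iff x hx) in He.
    destruct (e p) eqn:E; [|reflexivity]. now destruct (Hne (subsum_eq_term x hx e p E He)). }
  assert (Hle : (b <= S a)%nat).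
  { apply (has_card_le_succ _ _ a b compl (single p) Ha Hb Hsingle).
    - intros e He Hne. apply (represents_iff x hx). pose proof (Hcompl_sum e (Havoid e He Hne)).
      apply (represents_iff x hx) in He. lra.
    - intros e e' He He' Hne Hne'. apply Hcompl_inj; apply Havoid; assumption. }
  lia.
Qed.

Lemma card_reps_shift p q b c : gap_condition x (fun _ => true) ->
  (forall k, x k <= x p) -> 2 * x p <= rest p -> x q < x p ->
  has_card (represents x (x q)) b -> has_card (represents x (x q + x p)) c -> (S b <= c)%nat.
Proof.
  intros Hgap Hmax Hrest Hqp Hb Hc. set (M := fun k => negb (single p k)).
  assert (HgapM : gap_condition x M).
  { apply (gap_condition_lower_part x hx (fun _ => true)); [exact Hgap|easy|].
    intros k j _ Hk _. unfold M, single in Hk. apply negb_false_iff, Nat.eqb_eq in Hk as ->.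
    apply Hmax. }
  destruct (gap_condition_fills x hx M (x q + x p)) as [e0 [He0M He0]]; [exact HgapM| |].
  { change (subsum x M) with (rest p). pose proof (proj1 hx q). lra. }
  assert (Hsmall : forall e, represents x (x q) e -> e p = false).
  { intros e He. apply (represents_iff x hx) in He. exact (subsum_avoid x hx e _ p He Hqp). }
  apply (has_card_succ_le _ _ b c (fun e k => e k || single p k) e0 Hb Hc);
    [now apply (represents_iff x hx)| |].
  - intros e He. split.
    + apply (represents_iff x hx). rewrite (subsum_add x hx e p (Hsmall e He)).
      apply (represents_iff x hx) in He. now rewrite He.
    + intros Heq. apply (f_equal (fun f => f p)) in Heq. unfold single in Heq.
      rewrite Nat.eqb_refl, orb_true_r in Heq. symmetry in Heq.
      specialize (He0M p Heq). unfold M, single in He0M. now rewrite Nat.eqb_refl in He0M.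
  - intros e e' He He' Heq. apply functional_extensionality. intros k.
    destruct (Nat.eq_dec k p) as [->|Hkp]; [now rewrite (Hsmall e He), (Hsmall e' He')|].
    apply (f_equal (fun f => f k)) in Heq. unfold single in Heq.
    now rewrite (proj2 (Nat.eqb_neq k p) Hkp), !orb_false_r in Heq.
Qed.

End Cardinalities.

Theorem theorem3p6 (m : nat) (hm : (3 <= m)%nat) :
  ~ exists x : nat -> R,
      (forall n, 0 < x n) /\ summable x /\ interval_filling x /\
      cardinal_range_is x (fun k => k = 1%nat \/ k = m).
Proof.
  intros [x [Hpos [[s Hs] [Hfill [Hrange _]]]]].
  assert (hx : pos_summable x) by (split; [exact Hpos|exists s; now apply is_series_Reals]).
  assert (Hach : forall t, 0 <= t <= subsum x (fun _ => true) -> achievement_set x t).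
  { intros t Ht. apply (Hfill 0 (subsum x (fun _ => true)) t); [| |exact Ht];
      [exists (fun _ => false)|exists (fun _ => true)];
      apply represents_iff; [exact hx|apply subsum_empty|exact hx|reflexivity]. }
  assert (Hcard : forall t, 0 <= t <= subsum x (fun _ => true) ->
            exists k, (k = 1%nat \/ k = m) /\ has_card (represents x t) k)
    by (intros t Ht; apply Hrange, Hach, Ht).
  assert (Hgap : gap_condition x (fun _ => true)).
  { apply gap_condition_of_fill; [exact hx|]. intros t Ht.
    destruct (Hach t Ht) as [e He]. exists e. now apply represents_iff. }
  destruct (exists_max_term x hx (fun _ => true) 0 eq_refl) as [p [_ Hmax]].
  pose proof (subsum_all_split x hx p) as Htotal.
  pose proof (max_term_le_rest x hx p Hgap (fun k => Hmax k eq_refl)) as Hp_rest.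
  destruct (Rlt_le_dec (rest x p) (2 * x p)) as [Hsmall|Hlarge].
  - destruct (Hcard (rest x p - x p)) as [a [Ha Hca]]; [lra|].
    destruct (Hcard (x p)) as [b [Hb Hcb]]; [pose proof (proj1 hx p); lra|].
    pose proof (card_reps_max_term x hx p a b Hsmall Hca Hcb). lia.
  - destruct (term_lt x hx (x p) (proj1 hx p)) as [q Hq]. specialize (Hq q (le_n q)).
    destruct (Hcard (x q)) as [b [Hb Hcb]]; [pose proof (proj1 hx q); lra|].
    destruct (Hcard (x q + x p)) as [c [Hc Hcc]]; [pose proof (proj1 hx q); lra|].
    pose proof (card_reps_term_ge2 x hx q b Hgap Hcb).
    pose proof (card_reps_shift x hx p q b c Hgap (fun k => Hmax k eq_refl) Hlarge Hq Hcb Hcc).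
    lia.
Qed.
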